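(* For every $T\ge0$, $k\in\mathbb N_+$, $\ell\in\{1,\dots,k\}$ and $n\in\{1,\dots,\ell\}$, $$v(k,T)-v(\ell,T)\ge v(k-n,T)-v(\ell-n,T).$$ Moreover, for every $T\ge0$ and integers $0\le\ell\le k$, $a(\ell,T)\le a(k,T)$.
   Context: Let $\lambda>0$ and let $N$ be a Poisson process with intensity $\lambda$, arrival times $0<\sigma_1<\sigma_2<\cdots$, and natural filtration $\mathcal F_t=\sigma(N_s:s\le t)$. Let $F:[0,\infty)\to[0,\infty)$ be strictly increasing and strictly convex with $F(0)=0$. For $k\in\{0,1,\dots\}$ let $\mathcal A_k$ be the set of $(\mathcal F_t)$-adapted, integer-valued, nonnegative, non-increasing processes $\xi$ with $\xi_0=k$ whose values change only at arrival times of $N$, and $v(k,T)=\inf_{\xi\in\mathcal A_k}\mathbb E[\sum_{i:\sigma_i\le T}F(\xi_{\sigma_i-}-\xi_{\sigma_i})+F(\xi_T)]$ (so $v(0,T)=0$). For $k\in\mathbb N_+$, $a(k,T)$ is the smallest minimizer over $a\in\{1,\dots,k\}$ of $v(k-a,T)+F(a)$, and $a(0,T)=0$. *)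

From HB Require Import structures.
From mathcomp Require Import all_boot all_order all_algebra.
From mathcomp Require Import all_classical all_reals all_analysis.
Set Implicit Arguments. Unset Strict Implicit. Unset Printing Implicit Defensive.
Import Order.TTheory GRing.Theory Num.Theory.
Local Open Scope classical_set_scope.
Local Open Scope ring_scope.

Section Defs.
Context {R : realType} {d : measure_display} {Omega : measurableType d}.

Definition interarrival (sigma : nat -> Omega -> R) (i : nat) : Omega -> R :=
  fun w => sigma i.+1 w - sigma i w.

(* N is a Poisson process of intensity lam with arrival times
   sigma 1 < sigma 2 < ... (sigma 0 = 0 by convention):
   paths are (surely) strictly increasing and tend to +oo, the arrival
   times are random variables, and the interarrival times are mutually
   independent Exp(lam) random variables. *)
Definition poisson_arrivals (P : probability Omega R) (lam : R)
    (sigma : nat -> Omega -> R) : Prop :=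
  [/\ (forall w, sigma 0%N w = 0),
      (forall w i, sigma i w < sigma i.+1 w),
      (forall w, sigma ^~ w @ \oo --> +oo),
      (forall i, measurable_fun setT (sigma i)) /\
      (forall i (t : R), 0 <= t ->
          P [set w | t < interarrival sigma i w] = (expR (- (lam * t)))%:E) &
      (forall (n : nat) (B : nat -> set R), (forall i, measurable (B i)) ->
          P (\bigcap_(i in `I_n) (interarrival sigma i @^-1` B i)) =
          (\prod_(i < n) P (interarrival sigma i @^-1` B i))%E)].

(* counting process N_t = #{i >= 1 : sigma_i <= t} *)
Definition Ncount (sigma : nat -> Omega -> R) (t : R) (w : Omega) : nat :=
  xget 0%N [set n : nat | sigma n w <= t < sigma n.+1 w].

Definition natfilt (sigma : nat -> Omega -> R) (t : R) : set (set Omega) :=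
  <<s [set A | exists s m, [/\ 0 <= s, s <= t &
                A = [set w | Ncount sigma s w = m]] ] >>.

Definition admissible (sigma : nat -> Omega -> R) (k : nat)
    (xi : R -> Omega -> nat) : Prop :=
  [/\ (forall t, 0 <= t -> forall m : nat, natfilt sigma t [set w | xi t w = m]),
      (forall w s t, 0 <= s -> s <= t -> (xi t w <= xi s w)%N),
      (forall w, xi 0 w = k) &
      (forall w i t, sigma i w <= t -> t < sigma i.+1 w ->
          xi t w = xi (sigma i w) w)].

(* pathwise cost: sum over arrivals sigma_i <= T of F(xi_{sigma_i-} - xi_{sigma_i})
   plus F(xi_T); xi_{sigma_i -} = xi_{sigma_{i-1}} since xi is constant
   on [sigma_{i-1}, sigma_i). *)
Definition cost (sigma : nat -> Omega -> R) (F : R -> R)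
    (xi : R -> Omega -> nat) (T : R) (w : Omega) : R :=
  \sum_(1 <= i < (Ncount sigma T w).+1)
     F (xi (sigma i.-1 w) w - xi (sigma i w) w)%:R
  + F (xi T w)%:R.

Definition value (P : probability Omega R) (sigma : nat -> Omega -> R)
    (F : R -> R) (k : nat) (T : R) : \bar R :=
  ereal_inf [set (\int[P]_w (cost sigma F xi T w)%:E)%E
            | xi in admissible sigma k].

(* a(k,T): smallest minimiser over a in {1..k} of v(k-a,T) + F(a); a(0,T)=0 *)
Definition aopt (P : probability Omega R) (sigma : nat -> Omega -> R)
    (F : R -> R) (k : nat) (T : R) : nat :=
  let c := fun a : nat => (value P sigma F (k - a) T + (F a%:R)%:E)%E in
  head 0%N [seq a <- iota 1 k | all (fun b => (c a <= c b)%E) (iota 1 k)].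

End Defs.

From HB Require Import structures.
From mathcomp Require Import all_boot all_order all_algebra.
From mathcomp Require Import all_classical all_reals all_analysis.
From mathcomp Require Import measurable_realfun.
From mathcomp Require Import ring lra zify.
Import Order.TTheory GRing.Theory Num.Theory.
Local Open Scope classical_set_scope.
Local Open Scope ring_scope.

(* An exchange argument.  If [xi] is admissible from [k] shares and [eta]
   from [l - n], then [max(xi - n, eta)] is admissible from [k - n] and
   [min(xi, eta + n)] from [l].  At every arrival the two new jumps have the
   same total as the jumps of [xi] and [eta] and lie between them, so by
   convexity of [F] the exchanged pair costs pathwise no more.  Taking infima
   gives [v(k - n) + v(l) <= v(k) + v(l - n)], and monotonicity of the
   smallest minimiser [a(., T)] is a formal consequence of this
   submodularity. *)

Definition convex_nonneg {R : numDomainType} (F : R -> R) :=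
  forall x y t, 0 <= x -> 0 <= y -> 0 < t < 1 ->
    F (t * x + (1 - t) * y) <= t * F x + (1 - t) * F y.

Section convex_exchange.
Context {R : realFieldType} (F : R -> R).

Lemma strictly_convex_convex_nonneg :
  (forall x y t, 0 <= x -> 0 <= y -> x != y -> 0 < t < 1 ->
      F (t * x + (1 - t) * y) < t * F x + (1 - t) * F y) ->
  convex_nonneg F.
Proof.
move=> Fc x y t x0 y0 t01; have [<-|xy] := eqVneq x y.
  by rewrite -!mulrDl subrKC !mul1r.
exact/ltW/Fc.
Qed.

Hypothesis Fc : convex_nonneg F.

Lemma convex_exchange Q p P q : 0 <= Q -> Q <= p <= P -> p + q = P + Q ->
  F p + F q <= F P + F Q.
Proof.
move=> Q0 /andP[Qp pP] e.
have [pQ|pQ] := eqVneq p Q.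
  have -> : q = P by lra.
  by rewrite pQ addrC.
have [pP'|pP'] := eqVneq p P.
  have -> : q = Q by lra.
  by rewrite pP'.
set t := (p - Q) / (P - Q).
have t01 : 0 < t < 1.
  by apply/andP; split; [apply: divr_gt0|rewrite ltr_pdivrMr]; lra.
have Fp : F p <= t * F P + (1 - t) * F Q.
  have -> : p = t * P + (1 - t) * Q by rewrite /t; field; lra.
  by apply: Fc => //; lra.
have Fq : F q <= (1 - t) * F P + t * F Q.
  have -> : q = (1 - t) * P + (1 - (1 - t)) * Q.
    have -> : q = P + Q - p by lra.
    by rewrite subKr /t; field; lra.
  by have := Fc P Q (1 - t); rewrite subKr; apply; lra.
lra.
Qed.

Lemma convex_exchange_nat (Q p P q : nat) :
  (Q <= p <= P)%N -> (p + q = P + Q)%N -> F p%:R + F q%:R <= F P%:R + F Q%:R.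
Proof.
move=> /andP[Qp pP] e.
by apply: convex_exchange; rewrite ?ler_nat ?Qp ?pP // -!natrD e.
Qed.

Lemma convex_exchange_jumps (n X0 X1 Y0 Y1 : nat) :
  (X1 <= X0)%N -> (Y1 <= Y0)%N ->
  F (maxn (X0 - n) Y0 - maxn (X1 - n) Y1)%:R +
  F (minn X0 (Y0 + n) - minn X1 (Y1 + n))%:R <=
  F (X0 - X1)%:R + F (Y0 - Y1)%:R.
Proof.
move=> X10 Y10; have [YX|XY] := leqP (Y0 - Y1) (X0 - X1).
  by apply: convex_exchange_nat; lia.
by rewrite [X in _ <= X]addrC; apply: convex_exchange_nat; lia.
Qed.

Lemma convex_exchange_levels (n X Y : nat) :
  F (maxn (X - n) Y)%:R + F (minn X (Y + n))%:R <= F X%:R + F Y%:R.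
Proof.
have := @convex_exchange_jumps n X 0 Y 0 (leq0n X) (leq0n Y).
by rewrite !subn0 min0n subn0.
Qed.

End convex_exchange.

Section measurable_levels.
Context {d : measure_display} {T : measurableType d}.

Lemma measurable_levels_op (h : nat -> nat -> nat) (f g : T -> nat) :
  (forall a, measurable [set w | f w = a]) ->
  (forall b, measurable [set w | g w = b]) ->
  forall m, measurable [set w | h (f w) (g w) = m].
Proof.
move=> mf mg m.
have -> : [set w | h (f w) (g w) = m] = \bigcup_a
    \bigcup_(b in [set b | h a b = m])
      ([set w | f w = a] `&` [set w | g w = b]).
  apply/seteqP; split=> [w <-|w [a _ [b /= <- [/= -> ->]]]] //.
  by exists (f w) => //; exists (g w).
apply: bigcupT_measurable => a; apply: bigcup_measurable => b _.
exact: measurableI.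
Qed.

Lemma measurable_fun_select {d'} {U : measurableType d'}
    (g : nat -> T -> U) (N : T -> nat) :
  (forall m, measurable [set w | N w = m]) ->
  (forall m, measurable_fun setT (g m)) ->
  measurable_fun setT (fun w => g (N w) w).
Proof.
move=> mN mg _ B mB; rewrite setTI.
have -> : (fun w => g (N w) w) @^-1` B =
    \bigcup_m ([set w | N w = m] `&` g m @^-1` B).
  by apply/seteqP; split=> [w|w [m _ [/= <-]]] //; exists (N w).
apply: bigcupT_measurable => m; apply: measurableI => //.
by rewrite -[_ @^-1` _]setTI; exact: mg.
Qed.

End measurable_levels.

Lemma natfilt_levels_op {R : realType} {d : measure_display}
    {Omega : measurableType d} (sigma : nat -> Omega -> R) t
    (h : nat -> nat -> nat) (f g : Omega -> nat) :
  (forall a, natfilt sigma t [set w | f w = a]) ->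
  (forall b, natfilt sigma t [set w | g w = b]) ->
  forall m, natfilt sigma t [set w | h (f w) (g w) = m].
Proof. exact: (@measurable_levels_op _ (g_sigma_algebraType _)). Qed.

Lemma lee_adde_ereal_inf {R : realType} (x c : \bar R) (S : set \bar R) :
  (0 <= c)%E -> (forall y, S y -> 0 <= y)%E ->
  (forall y, S y -> x <= c + y)%E -> (x <= c + ereal_inf S)%E.
Proof.
move=> c0 S_ge0 xS; case: c c0 xS => [c _ xS|_ _|//].
  by rewrite -leeBlDl //; apply/ereal_infP => y Sy; rewrite leeBlDl ?xS.
have : (0 <= ereal_inf S)%E by apply/ereal_infP.
by case: (ereal_inf S) => // [r|] _; rewrite ?addye ?leey.
Qed.

Lemma ge0_le_integralD {d} {T : measurableType d} {R : realType}
    (mu : measure T R) (f1 f2 g1 g2 : T -> R) :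
  (forall x, 0 <= f1 x) -> (forall x, 0 <= f2 x) ->
  (forall x, 0 <= g1 x) -> (forall x, 0 <= g2 x) ->
  measurable_fun setT f1 -> measurable_fun setT f2 ->
  measurable_fun setT g1 -> measurable_fun setT g2 ->
  (forall x, f1 x + f2 x <= g1 x + g2 x) ->
  (\int[mu]_x (f1 x)%:E + \int[mu]_x (f2 x)%:E <=
   \int[mu]_x (g1 x)%:E + \int[mu]_x (g2 x)%:E)%E.
Proof.
move=> f10 f20 g10 g20 mf1 mf2 mg1 mg2 fg.
rewrite -!ge0_integralD //; try by move=> x _; rewrite lee_fin.
  apply: ge0_le_integral => //.
  - by move=> x _; rewrite -EFinD lee_fin addr_ge0.
  - by apply/measurable_EFinP; exact: measurable_funD.
  - by apply/measurable_EFinP; exact: measurable_funD.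
  - by move=> x _; rewrite -!EFinD lee_fin.
all: exact/measurable_EFinP.
Qed.

Definition first_argmin {disp} {T : orderType disp} (C : nat -> T) (k : nat) :
    nat :=
  head 0%N [seq a <- iota 1 k | all (fun b => C a <= C b)%O (iota 1 k)].

Lemma eq_first_argmin {disp1 disp2}
    {T1 : orderType disp1} {T2 : orderType disp2}
    (C1 : nat -> T1) (C2 : nat -> T2) k :
  (forall a b, (C1 a <= C1 b)%O = (C2 a <= C2 b)%O) ->
  first_argmin C1 k = first_argmin C2 k.
Proof. by move=> CE; congr head; apply: eq_filter => a; apply: eq_all => b. Qed.

Lemma head_filter_iota (p : pred nat) m k : has p (iota m k) ->
  let x := head 0%N [seq a <- iota m k | p a] in
  [/\ x \in iota m k, p x & forall a, a \in iota m k -> p a -> (x <= a)%N].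
Proof.
elim: k m => [//|k IH] m /=; case pm: (p m) => /=; [move=> _|move=> hp].
  split=> // [|a]; first exact: mem_head.
  by move=> + _; rewrite in_cons mem_iota => /orP[/eqP ->|]; lia.
have [xin px x_min] := IH m.+1 hp.
split=> //; first by rewrite in_cons xin orbT.
by move=> a; rewrite in_cons => /orP[/eqP ->|/x_min//]; rewrite pm.
Qed.

Lemma first_argminP {disp} {T : orderType disp} (C : nat -> T) k :
  (0 < k)%N ->
  let m := first_argmin C k in
  [/\ (0 < m <= k)%N, forall b, (0 < b <= k)%N -> (C m <= C b)%O &
      forall a, (0 < a <= k)%N ->
        (forall b, (0 < b <= k)%N -> (C a <= C b)%O) -> (m <= a)%N].
Proof.
move=> k0 /=.
have memI b : (b \in iota 1 k) = (0 < b <= k)%N by rewrite mem_iota; lia.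
have minP a : reflect (forall b, (0 < b <= k)%N -> (C a <= C b)%O)
                      (all (fun b => C a <= C b)%O (iota 1 k)).
  by apply: (iffP allP) => Ca b bk; apply: Ca; rewrite ?memI in bk *.
have has_min :
    has (fun a => all (fun b => C a <= C b)%O (iota 1 k)) (iota 1 k).
  apply/hasP; have [a a0 a_min] := arg_minP (fun i : 'I_k.+1 => C i)
    (P := fun i : 'I_k.+1 => (0 < i)%N) (i0 := ord_max) k0.
  exists (val a); first by rewrite memI a0 -ltnS ltn_ord.
  by apply/minP => b /andP[b0 bk]; exact: (a_min (Ordinal (bk : b < k.+1)%N)).
have [+ /minP + m_first] := head_filter_iota _ _ _ has_min.
rewrite memI => mk m_min; split=> // a ak /minP.
by apply: m_first; rewrite memI.
Qed.

(* If [a_k < a_l], submodularity transfers the optimality of [a_k] for [k]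
   to [l], contradicting the minimality of [a_l]. *)
Lemma first_argmin_homo {R : realDomainType} (V G : nat -> R) l k :
  (forall k l n, (n <= l <= k)%N -> V (k - n)%N + V l <= V k + V (l - n)%N) ->
  (l <= k)%N ->
  (first_argmin (fun a => (V (l - a)%N + G a)%R) l <=
   first_argmin (fun a => (V (k - a)%N + G a)%R) k)%N.
Proof.
move=> V_sub; case: l => [//|l] lk.
have [/andP[b0 bl] b_min b_first] :=
  first_argminP (fun a => V (l.+1 - a)%N + G a) _ (ltn0Sn l).
have [/andP[a0 ak] a_min _] :=
  first_argminP (fun a => V (k - a)%N + G a) _ (leq_trans (ltn0Sn l) lk).
set a := first_argmin _ k in a0 ak a_min *.
set b := first_argmin _ l.+1 in b0 bl b_min b_first *.
rewrite leqNgt; apply/negP => ab.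
suff : (b <= a)%N by rewrite leqNgt ab.
apply: b_first => [|c cl]; first by lia.
apply: le_trans (b_min c cl).
have Ca_le_Cb : V (k - a)%N + G a <= V (k - b)%N + G b by apply: a_min; lia.
suff : V (k - b)%N + V (l.+1 - a)%N <= V (k - a)%N + V (l.+1 - b)%N by lra.
have -> : (k - b = k - a - (b - a))%N by lia.
have -> : (l.+1 - b = l.+1 - a - (b - a))%N by lia.
by apply: V_sub; lia.
Qed.

Definition exchange_max {T Omega : Type} (n : nat)
    (xi eta : T -> Omega -> nat) :
    T -> Omega -> nat :=
  fun t w => maxn (xi t w - n) (eta t w).

Definition exchange_min {T Omega : Type} (n : nat)
    (xi eta : T -> Omega -> nat) :
    T -> Omega -> nat :=
  fun t w => minn (xi t w) (eta t w + n).

Section arrivals.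
Context {R : realType} {d : measure_display} {Omega : measurableType d}.
Variable sigma : nat -> Omega -> R.
Hypothesis sigma0 : forall w, sigma 0%N w = 0.
Hypothesis sigma_lt : forall w i, sigma i w < sigma i.+1 w.

Lemma sigma_le w : {homo sigma ^~ w : i j / (i <= j)%N >-> i <= j}.
Proof. by apply: homo_leq => [//|y x z|i]; [exact: le_trans|exact/ltW]. Qed.

Lemma sigma_ge0 i w : 0 <= sigma i w.
Proof. by rewrite -(sigma0 w) sigma_le. Qed.

Lemma cost_exchange (F : R -> R) n (xi eta : R -> Omega -> nat) T w :
  convex_nonneg F ->
  (forall w s t, 0 <= s -> s <= t -> (xi t w <= xi s w)%N) ->
  (forall w s t, 0 <= s -> s <= t -> (eta t w <= eta s w)%N) ->
  cost sigma F (exchange_max n xi eta) T w +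
  cost sigma F (exchange_min n xi eta) T w <=
  cost sigma F xi T w + cost sigma F eta T w.
Proof.
move=> Fc xi_mono eta_mono.
rewrite /cost addrACA [X in _ <= X]addrACA -!big_split /=.
apply: lerD; last exact: convex_exchange_levels.
apply: ler_sum => i _; apply: convex_exchange_jumps => //.
  by apply: xi_mono; rewrite ?sigma_ge0 ?sigma_le ?leq_pred.
by apply: eta_mono; rewrite ?sigma_ge0 ?sigma_le ?leq_pred.
Qed.

Hypothesis sigma_cvgy : forall w, sigma ^~ w @ \oo --> +oo.

Lemma Ncount_spec t w : 0 <= t ->
  sigma (Ncount sigma t w) w <= t < sigma (Ncount sigma t w).+1 w.
Proof.
move=> t0; apply: (@xgetPex _ 0%N [set n | sigma n w <= t < sigma n.+1 w]).
have [N _ tN] := (cvgryPgt _).1 (sigma_cvgy w) t.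
have [[|m] tm m_min] := ex_minnP (ex_intro _ N (tN N (leqnn N))).
  by rewrite sigma0 in tm; lra.
exists m; rewrite /= tm andbT leNgt.
by apply/negP => /m_min; rewrite ltnn.
Qed.

Lemma NcountE t w m : 0 <= t ->
  (Ncount sigma t w = m) <-> (sigma m w <= t < sigma m.+1 w).
Proof.
move=> t0; have /andP[Nt tN] := Ncount_spec t w t0.
split=> [<-|/andP[mt tm]]; first exact/andP.
have [mN|Nm|//] := ltngtP m (Ncount sigma t w).
  by exfalso; have := sigma_le w _ _ mN; lra.
by exfalso; have := sigma_le w _ _ Nm; lra.
Qed.

Hypothesis sigma_meas : forall i, measurable_fun setT (sigma i).

Lemma measurable_Ncount_eq t m : 0 <= t ->
  measurable [set w | Ncount sigma t w = m].
Proof.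
move=> t0; have -> : [set w | Ncount sigma t w = m] =
    sigma m @^-1` `]-oo, t]%classic `&` sigma m.+1 @^-1` `]t, +oo[%classic.
  apply/seteqP; split=> w /=; rewrite NcountE // !in_itv /= andbT.
    by move/andP.
  by move=> [-> ->].
by apply: measurableI; rewrite -[_ @^-1` _]setTI; apply: sigma_meas.
Qed.

Lemma natfilt_measurable t A : natfilt sigma t A -> measurable A.
Proof.
apply: smallest_sub; first exact: sigma_algebra_measurable.
by move=> _ [s [m [s0 _ ->]]]; exact: measurable_Ncount_eq.
Qed.

Lemma admissible_cst k : admissible sigma k (fun _ _ => k).
Proof.
split=> // t _ m.
have -> : [set _ : Omega | k = m] = if k == m then setT else set0.
  by apply/seteqP; split=> w /=; case: eqP.
case: eqP => _; first exact: (@measurableT _ (g_sigma_algebraType _)).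
exact: (@measurable0 _ (g_sigma_algebraType _)).
Qed.

Lemma admissible_exchange {k l n xi eta} : (n <= l <= k)%N ->
  admissible sigma k xi -> admissible sigma (l - n) eta ->
  admissible sigma (k - n) (exchange_max n xi eta) /\
  admissible sigma l (exchange_min n xi eta).
Proof.
move=> /andP[nl lk] [xi_F xi_mono xi0 xi_step] [eta_F eta_mono eta0 eta_step].
split; split=> [t t0|w s t s0 st|w|w i t it ti];
  rewrite /exchange_max /exchange_min.
- exact: (natfilt_levels_op _ _ (fun a b => maxn (a - n) b) _ _
    (xi_F t t0) (eta_F t t0)).
- by have := xi_mono w s t s0 st; have := eta_mono w s t s0 st; lia.
- by rewrite xi0 eta0; lia.
- by rewrite (xi_step w i t) ?(eta_step w i t).
- exact: (natfilt_levels_op _ _ (fun a b => minn a (b + n)) _ _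
    (xi_F t t0) (eta_F t t0)).
- by have := xi_mono w s t s0 st; have := eta_mono w s t s0 st; lia.
- by rewrite xi0 eta0; lia.
- by rewrite (xi_step w i t) ?(eta_step w i t).
Qed.

(* [xi] is constant on [sigma_i, sigma_(i+1)), which contains a rational
   time; the absolute value restricts the union to nonnegative times. *)
Lemma measurable_admissible_at_arrival k xi i a : admissible sigma k xi ->
  measurable [set w | xi (sigma i w) w = a].
Proof.
case=> xi_F _ _ xi_step.
have -> : [set w | xi (sigma i w) w = a] = \bigcup_(q : rat)
    ([set w | Ncount sigma `|ratr q| w = i] `&` [set w | xi `|ratr q| w = a]).
  apply/seteqP; split=> w /=.
    move=> xia; have [q] := rat_in_itvoo (sigma_lt w i).
    rewrite in_itv /= => /andP[q1 q2].
    have q0 : 0 <= ratr q :> R by exact: le_trans (sigma_ge0 _ _) (ltW q1).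
    exists q => //; rewrite ger0_norm //; split=> /=.
      by apply/NcountE => //; rewrite (ltW q1).
    by rewrite (xi_step w i) ?(ltW q1).
  case=> q _ [/= /NcountE-/(_ (normr_ge0 _)) /andP[q1 q2] <-].
  by rewrite (xi_step w i).
apply: bigcupT_measurable_rat => q; apply: measurableI.
  exact: measurable_Ncount_eq.
exact: natfilt_measurable (xi_F _ (normr_ge0 _) _).
Qed.

Lemma measurable_cost F k xi T : admissible sigma k xi -> 0 <= T ->
  measurable_fun setT (cost sigma F xi T).
Proof.
move=> xi_adm T0; have [xi_F _ _ _] := xi_adm.
apply: (measurable_fun_select (fun m w => \sum_(1 <= i < m.+1)
          F (xi (sigma i.-1 w) w - xi (sigma i w) w)%:R + F (xi T w)%:R)
  (Ncount sigma T)).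
  by move=> m; exact: measurable_Ncount_eq.
move=> m; apply: measurable_funD.
  apply: measurable_sum => i.
  apply: (measurable_fun_select (fun a _ => F a%:R)) => // a.
  by apply: measurable_levels_op => b;
    exact: measurable_admissible_at_arrival xi_adm.
apply: (measurable_fun_select (fun a _ => F a%:R)) => // a.
exact: natfilt_measurable (xi_F _ T0 _).
Qed.

Variables (P : probability Omega R) (F : R -> R).
Hypothesis F0 : F 0 = 0.
Hypothesis F_ge0 : forall x, 0 <= x -> 0 <= F x.

Lemma cost_ge0 xi T w : 0 <= cost sigma F xi T w.
Proof.
by apply: addr_ge0 (F_ge0 _ _) => //; apply: sumr_ge0 => i _; exact: F_ge0.
Qed.

Lemma integral_cost_ge0 xi T : (0 <= \int[P]_w (cost sigma F xi T w)%:E)%E.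
Proof. by apply: integral_ge0 => w _; rewrite lee_fin cost_ge0. Qed.

Lemma value_ge0 k T : (0 <= value P sigma F k T)%E.
Proof. by apply/ereal_infP => _ [xi _ <-]; exact: integral_cost_ge0. Qed.

Lemma value_le_F k T : (value P sigma F k T <= (F k%:R)%:E)%E.
Proof.
apply: ereal_inf_lbound; exists (fun _ _ => k); first exact: admissible_cst.
have -> : (fun w => (cost sigma F (fun _ _ => k) T w)%:E) = cst (F k%:R)%:E.
  by apply/funext => w; rewrite /cost big1 ?add0r // => i _; rewrite subnn F0.
rewrite integral_cst // -[RHS]mule1; congr (_ * _)%E; exact: probability_setT.
Qed.

Lemma value_fin_num k T : value P sigma F k T \is a fin_num.
Proof.
by rewrite ge0_fin_numE ?value_ge0 // (le_lt_trans (value_le_F k T)) ?ltey.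
Qed.

Lemma aoptE k T : aopt P sigma F k T =
  first_argmin (fun a => fine (value P sigma F (k - a) T) + F a%:R) k.
Proof.
apply: eq_first_argmin => a b.
by rewrite -(fineK (value_fin_num (k - a) T)) -(fineK (value_fin_num (k - b) T))
  -!EFinD lee_fin.
Qed.

Hypothesis F_convex : convex_nonneg F.

Lemma value_submodular k l n T : (n <= l <= k)%N -> 0 <= T ->
  (value P sigma F (k - n) T + value P sigma F l T <=
   value P sigma F k T + value P sigma F (l - n) T)%E.
Proof.
move=> nlk T0; rewrite [X in (_ <= X)%E]addeC.
apply: lee_adde_ereal_inf => [|_ [xi _ <-]|_ [xi xi_adm <-]];
  rewrite ?value_ge0 ?integral_cost_ge0 // [X in (_ <= X)%E]addeC.
apply: lee_adde_ereal_inf => [|_ [eta _ <-]|_ [eta eta_adm <-]];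
  rewrite ?integral_cost_ge0 //.
have [xi'_adm eta'_adm] := admissible_exchange nlk xi_adm eta_adm.
apply: le_trans (_ : (\int[P]_w (cost sigma F (exchange_max n xi eta) T w)%:E +
  \int[P]_w (cost sigma F (exchange_min n xi eta) T w)%:E <= _)%E).
  by apply: leeD; apply: ereal_inf_lbound;
    [exists (exchange_max n xi eta)|exists (exchange_min n xi eta)].
apply: ge0_le_integralD; try exact: cost_ge0.
- exact: measurable_cost xi'_adm T0.
- exact: measurable_cost eta'_adm T0.
- exact: measurable_cost xi_adm T0.
- exact: measurable_cost eta_adm T0.
- case: xi_adm => _ xi_mono _ _; case: eta_adm => _ eta_mono _ _.
  by move=> w; exact: cost_exchange.
Qed.

End arrivals.

Theorem lemma2p7 (R : realType) (d : measure_display) (Omega : measurableType d)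
    (P : probability Omega R) (lam : R) (sigma : nat -> Omega -> R)
    (F : R -> R) :
  0 < lam ->
  poisson_arrivals P lam sigma ->
  F 0 = 0 ->
  (forall x, 0 <= x -> 0 <= F x) ->
  (forall x y, 0 <= x -> x < y -> F x < F y) ->
  (forall x y t, 0 <= x -> 0 <= y -> x != y -> 0 < t < 1 ->
      F (t * x + (1 - t) * y) < t * F x + (1 - t) * F y) ->
  (forall (T : R) (k l n : nat), 0 <= T -> (1 <= k)%N ->
      (1 <= l <= k)%N -> (1 <= n <= l)%N ->
      (value P sigma F (k - n) T - value P sigma F (l - n) T
        <= value P sigma F k T - value P sigma F l T)%E) /\
  (forall (T : R) (k l : nat), 0 <= T -> (l <= k)%N ->
      (aopt P sigma F l T <= aopt P sigma F k T)%N).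
Proof.
move=> _ [sigma0 sigma_lt sigma_cvgy [sigma_meas _] _] F0 F_ge0 _
  /strictly_convex_convex_nonneg F_convex.
have fin m T : value P sigma F m T \is a fin_num by exact: value_fin_num.
have V_sub T : 0 <= T -> forall k l n, (n <= l <= k)%N ->
    fine (value P sigma F (k - n) T) + fine (value P sigma F l T) <=
    fine (value P sigma F k T) + fine (value P sigma F (l - n) T).
  move=> T0 k l n nlk; rewrite -lee_fin !EFinD !fineK //.
  exact: value_submodular.
split=> [T k l n T0 _ /andP[_ lk] /andP[_ nl]|T k l T0 lk].
  rewrite -(fineK (fin (k - n)%N T)) -(fineK (fin (l - n)%N T)).
  rewrite -(fineK (fin k T)) -(fineK (fin l T)) -!EFinB lee_fin.
  by have := V_sub T T0 k l n; rewrite nl lk; lra.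
by rewrite !aoptE //; exact: first_argmin_homo (V_sub T T0) lk.
Qed.
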